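(* Let $\ell_n>0$, $\sigma_{n,0}>0$, $\sigma_{n,1}\ge0$, $\sigma_{n,-1}\ge0$, $\kappa_n\in\mathbb R$ for $n\in\mathbb N$, and assume $$\limsup_{n\to\infty}\sigma_{n,1}<\infty,\quad \liminf_{n\to\infty}\sigma_{n,0}>0,\quad \limsup_{n\to\infty}\sigma_{n,-1}<\infty,$$ $$0<\liminf_{n\to\infty}\sqrt{\ell_{n+1}/\ell_n}\le\limsup_{n\to\infty}\sqrt{\ell_{n+1}/\ell_n}<\infty,\qquad \limsup_{n\to\infty}\frac{|\kappa_n|}{\sqrt{\ell_n}}<\infty .$$ If a real sequence $(x_n)_{n\in\mathbb N}$ (with some $x_0\in\mathbb R$) satisfies $$\ell_n = x_n\big(\sigma_{n,1}x_{n+1}+\sigma_{n,0}x_n+\sigma_{n,-1}x_{n-1}\big)+\kappa_n x_n,\qquad n\in\mathbb N,$$ then $\liminf_{n\to\infty}x_n/\sqrt{\ell_n}>-\infty$ if and only if $\limsup_{n\to\infty}x_n/\sqrt{\ell_n}<\infty$.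
   Context: $\mathbb N=\{1,2,3,\dots\}$. The sequence $(x_n)$ need not be positive. *)

From Stdlib Require Import Reals Lra Lia.
Open Scope R_scope.

(* Finiteness statements about liminf / limsup of a real sequence
   a : nat -> R, written out via the definitions
   limsup a = inf_N sup_{n>=N} a n,  liminf a = sup_N inf_{n>=N} a n
   (values in the extended reals). *)

Definition limsup_lt_infty (a : nat -> R) : Prop :=
  exists M : R, exists N : nat, forall n : nat, (N <= n)%nat -> a n <= M.

Definition liminf_gt_neg_infty (a : nat -> R) : Prop :=
  exists m : R, exists N : nat, forall n : nat, (N <= n)%nat -> m <= a n.

Definition liminf_pos (a : nat -> R) : Prop :=
  exists c : R, 0 < c /\ exists N : nat, forall n : nat, (N <= n)%nat -> c <= a n.

From Stdlib Require Import Reals Lra Lia.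
Open Scope R_scope.

(* Normalise y_n = x_n / sqrt(l_n) and r_n = sqrt(l_(n+1) / l_n).
   Dividing the recurrence by l_n gives, for n >= 2,
     1 = s0_n y_n^2 + s1_n r_n y_n y_(n+1) + sm1_n y_n y_(n-1) / r_(n-1)
         + (kappa_n / sqrt l_n) y_n.
   If y_(n-1), y_(n+1) >= -m and y_n > 0, every term except the first is at
   least -D y_n for a constant D built from the eventual bounds on s1, sm1,
   r, 1/r and |kappa|/sqrt l; hence c0 y_n^2 <= 1 + D y_n, which bounds y_n.
   So a lower bound on (y_n) eventually forces an upper bound
   ([upper_bound_of_lower_bound]).  The recurrence is invariant under
   (x, kappa) |-> (-x, -kappa), which exchanges the two statements, so the
   converse is the same lemma applied to (-x, -kappa). *)

Definition eventually (P : nat -> Prop) : Prop :=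
  exists N : nat, forall n : nat, (N <= n)%nat -> P n.

Lemma eventually_and (P Q : nat -> Prop) :
  eventually P -> eventually Q -> eventually (fun n => P n /\ Q n).
Proof.
  intros [NP HP] [NQ HQ]; exists (NP + NQ)%nat; intros n hn.
  split; [apply HP | apply HQ]; lia.
Qed.

Lemma eventually_mono (P Q : nat -> Prop) :
  (forall n, P n -> Q n) -> eventually P -> eventually Q.
Proof. intros HPQ [N HP]; exists N; auto. Qed.

Lemma eventually_ge (k : nat) : eventually (fun n => (k <= n)%nat).
Proof. exists k; auto. Qed.

Lemma eventually_succ (P : nat -> Prop) :
  eventually P -> eventually (fun n => P (S n)).
Proof. intros [N HP]; exists N; intros n hn; apply HP; lia. Qed.

Lemma eventually_pred (P : nat -> Prop) :
  eventually P -> eventually (fun n => P (pred n)).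
Proof. intros [N HP]; exists (S N); intros n hn; apply HP; lia. Qed.

Lemma limsup_bound (a : nat -> R) :
  limsup_lt_infty a -> exists M, 0 <= M /\ eventually (fun n => a n <= M).
Proof.
  intros [M HM]; exists (Rmax M 0); split; [apply Rmax_r |].
  apply (eventually_mono (fun n => a n <= M)); [| exact HM].
  intros n h; pose proof (Rmax_l M 0); lra.
Qed.

Lemma liminf_bound (a : nat -> R) :
  liminf_gt_neg_infty a -> exists m, 0 <= m /\ eventually (fun n => - m <= a n).
Proof.
  intros [m Hm]; exists (Rmax (- m) 0); split; [apply Rmax_r |].
  apply (eventually_mono (fun n => m <= a n)); [| exact Hm].
  intros n h; pose proof (Rmax_l (- m) 0); lra.
Qed.

Lemma liminf_gt_neg_infty_opp (a b : nat -> R) :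
  (forall n, b n = - a n) -> liminf_gt_neg_infty b <-> limsup_lt_infty a.
Proof.
  intros Hb; split; intros [M [N HM]]; exists (- M), N; intros n hn;
    specialize (HM n hn); rewrite Hb in *; lra.
Qed.

Lemma limsup_lt_infty_opp (a b : nat -> R) :
  (forall n, b n = - a n) -> limsup_lt_infty b <-> liminf_gt_neg_infty a.
Proof.
  intros Hb; split; intros [M [N HM]]; exists (- M), N; intros n hn;
    specialize (HM n hn); rewrite Hb in *; lra.
Qed.

Lemma quadratic_bound (c D t : R) :
  0 < c -> 0 <= D -> c * t * t <= 1 + D * t -> t <= 1 + (1 + D) / c.
Proof.
  intros Hc HD Ht.
  assert (Hq : (1 + D) / c * c = 1 + D) by (field; lra).
  assert (Hq0 : 0 <= (1 + D) / c)
    by (apply Rmult_le_pos; [lra | left; apply Rinv_0_lt_compat; lra]).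
  destruct (Rle_or_lt t 1) as [Hle | Hgt]; [lra |].
  assert (Hct : c * t < 1 + D) by nra.
  nra.
Qed.

Lemma product_lower_bound (a A b m : R) :
  0 <= a <= A -> 0 <= m -> - m <= b -> - (A * m) <= a * b.
Proof. intros; nra. Qed.

Lemma quotient_lower_bound (b q c m : R) :
  0 < c <= q -> 0 <= m -> - m <= b -> - (m / c) <= b / q.
Proof.
  intros Hcq Hm Hb.
  assert (Hmq : m / q <= m / c).
  { apply Rmult_le_compat_l; [lra |]. apply Rinv_le_contravar; lra. }
  assert (Hbq : - m / q <= b / q).
  { apply Rmult_le_compat_r; [left; apply Rinv_0_lt_compat |]; lra. }
  replace (- m / q) with (- (m / q)) in Hbq by (field; lra).
  lra.
Qed.

Lemma abs_ratio_lower_bound (k q K : R) :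
  0 < q -> Rabs k / q <= K -> - K <= k / q.
Proof.
  intros Hq HK.
  assert (H : - k / q <= Rabs k / q).
  { apply Rmult_le_compat_r; [left; apply Rinv_0_lt_compat; lra |].
    rewrite <- Rabs_Ropp; apply Rle_abs. }
  replace (- k / q) with (- (k / q)) in H by (field; lra).
  lra.
Qed.

Lemma normalized_recurrence (lp ln lS s0 s1 sm1 k xp x xS : R) :
  0 < lp -> 0 < ln -> 0 < lS ->
  ln = x * (s1 * xS + s0 * x + sm1 * xp) + k * x ->
  1 = s0 * (x / sqrt ln) * (x / sqrt ln)
      + s1 * sqrt (lS / ln) * (x / sqrt ln) * (xS / sqrt lS)
      + sm1 * (x / sqrt ln) * ((xp / sqrt lp) / sqrt (ln / lp))
      + k / sqrt ln * (x / sqrt ln).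
Proof.
  intros Hp Hn HS Hrec.
  assert (sqp : 0 < sqrt lp) by (apply sqrt_lt_R0; lra).
  assert (sqn : 0 < sqrt ln) by (apply sqrt_lt_R0; lra).
  assert (sqS : 0 < sqrt lS) by (apply sqrt_lt_R0; lra).
  rewrite !sqrt_div_alt by lra.
  apply (Rmult_eq_reg_r ln); [| lra].
  assert (Hsq : sqrt ln * sqrt ln = ln) by (apply sqrt_sqrt; lra).
  rewrite Rmult_1_l, Hrec at 1.
  set (q := sqrt ln) in *.
  rewrite <- Hsq.
  field; lra.
Qed.

Lemma step_upper_bound (s0 s1 sm1 r rp k y yS yp c0 S1 Sm1 R cr K m : R) :
  0 < c0 -> c0 <= s0 -> 0 <= s1 <= S1 -> 0 <= sm1 <= Sm1 -> 0 <= r <= R ->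
  0 < cr <= rp -> 0 <= K -> - K <= k -> 0 <= m -> - m <= yS -> - m <= yp ->
  1 = s0 * y * y + s1 * r * y * yS + sm1 * y * (yp / rp) + k * y ->
  y <= 1 + (1 + (S1 * R * m + Sm1 * (m / cr) + K)) / c0.
Proof.
  intros Hc0 Hs0 Hs1 Hsm1 Hr Hcr HK Hk Hm HyS Hyp Hrec.
  set (D := S1 * R * m + Sm1 * (m / cr) + K).
  assert (Hmc : 0 <= m / cr)
    by (apply Rmult_le_pos; [lra | left; apply Rinv_0_lt_compat; lra]).
  assert (HSRm : 0 <= S1 * R * m) by (apply Rmult_le_pos; [apply Rmult_le_pos |]; lra).
  assert (HD : 0 <= D) by (unfold D; assert (0 <= Sm1 * (m / cr)) by nra; lra).
  assert (Hnext : - (S1 * R * m) <= s1 * r * yS)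
    by (apply product_lower_bound; [nra | lra | lra]).
  assert (Hprev : - (Sm1 * (m / cr)) <= sm1 * (yp / rp))
    by (apply product_lower_bound; [lra | lra | apply quotient_lower_bound; lra]).
  destruct (Rle_or_lt y 0) as [Hy | Hy].
  - assert (0 <= (1 + D) / c0)
      by (apply Rmult_le_pos; [lra | left; apply Rinv_0_lt_compat; lra]).
    lra.
  - apply quadratic_bound; [lra | lra |].
    assert (Hsum : - D <= s1 * r * yS + sm1 * (yp / rp) + k) by (unfold D; lra).
    assert (s0 * y * y = 1 - y * (s1 * r * yS + sm1 * (yp / rp) + k))
      by (rewrite Hrec; ring).
    nra.
Qed.

Section OneSidedBound.

Variables (l s0 s1 sm1 : nat -> R).
Hypothesis hl : forall n, (1 <= n)%nat -> 0 < l n.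
Hypothesis hs1 : forall n, (1 <= n)%nat -> 0 <= s1 n.
Hypothesis hsm1 : forall n, (1 <= n)%nat -> 0 <= sm1 n.
Hypothesis H1 : limsup_lt_infty s1.
Hypothesis H0 : liminf_pos s0.
Hypothesis Hm1 : limsup_lt_infty sm1.
Hypothesis Hr1 : liminf_pos (fun n => sqrt (l (S n) / l n)).
Hypothesis Hr2 : limsup_lt_infty (fun n => sqrt (l (S n) / l n)).

Lemma upper_bound_of_lower_bound (kappa x : nat -> R) :
  limsup_lt_infty (fun n => Rabs (kappa n) / sqrt (l n)) ->
  (forall n, (1 <= n)%nat ->
     l n = x n * (s1 n * x (S n) + s0 n * x n + sm1 n * x (pred n)) + kappa n * x n) ->
  liminf_gt_neg_infty (fun n => x n / sqrt (l n)) ->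
  limsup_lt_infty (fun n => x n / sqrt (l n)).
Proof.
  intros Hk Hrec Hlow.
  set (y := fun n => x n / sqrt (l n)).
  set (r := fun n => sqrt (l (S n) / l n)).
  destruct (limsup_bound _ H1) as [S1 [_ evS1]].
  destruct (limsup_bound _ Hm1) as [Sm1 [_ evSm1]].
  destruct (limsup_bound _ Hr2) as [R [_ evR]].
  destruct (limsup_bound _ Hk) as [K [HK evK]].
  destruct (liminf_bound _ Hlow) as [m [Hm evm]].
  destruct H0 as [c0 [Hc0 evc0]].
  destruct Hr1 as [cr [Hcr evcr]].
  exists (1 + (1 + (S1 * R * m + Sm1 * (m / cr) + K)) / c0).
  assert (Hev : eventually (fun n =>
    (2 <= n)%nat /\ c0 <= s0 n /\ s1 n <= S1 /\ sm1 n <= Sm1 /\ r n <= R /\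
    cr <= r (pred n) /\ Rabs (kappa n) / sqrt (l n) <= K /\
    - m <= y (S n) /\ - m <= y (pred n))).
  { repeat apply eventually_and;
      solve [ apply eventually_ge | assumption
            | apply (eventually_pred (fun n => cr <= r n)); assumption
            | apply (eventually_succ (fun n => - m <= y n)); assumption
            | apply (eventually_pred (fun n => - m <= y n)); assumption ]. }
  revert Hev; apply eventually_mono.
  intros n (Hn & Hs0 & HS1 & HSm1 & HR & Hcrn & HKn & HyS & Hyp).
  assert (Hsqrt : 0 < sqrt (l n)) by (apply sqrt_lt_R0, hl; lia).
  assert (Hrp : r (pred n) = sqrt (l n / l (pred n)))
    by (unfold r; replace (S (pred n)) with n by lia; reflexivity).
  assert (Hnorm : 1 = s0 n * y n * y n + s1 n * r n * y n * y (S n)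
                      + sm1 n * y n * (y (pred n) / r (pred n))
                      + kappa n / sqrt (l n) * y n).
  { unfold y; rewrite Hrp; unfold r.
    apply normalized_recurrence; try (apply hl; lia).
    apply Hrec; lia. }
  exact (step_upper_bound _ _ _ _ _ _ _ _ _ c0 S1 Sm1 R cr K m Hc0 Hs0
           (conj (hs1 n ltac:(lia)) HS1) (conj (hsm1 n ltac:(lia)) HSm1)
           (conj (sqrt_pos _) HR) (conj Hcr Hcrn) HK
           (abs_ratio_lower_bound _ _ _ Hsqrt HKn) Hm HyS Hyp Hnorm).
Qed.

End OneSidedBound.

Theorem corollary6p2
  (l s0 s1 sm1 kappa x : nat -> R)
  (hl : forall n, (1 <= n)%nat -> 0 < l n)
  (hs0 : forall n, (1 <= n)%nat -> 0 < s0 n)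
  (hs1 : forall n, (1 <= n)%nat -> 0 <= s1 n)
  (hsm1 : forall n, (1 <= n)%nat -> 0 <= sm1 n)
  (H1 : limsup_lt_infty s1)
  (H0 : liminf_pos s0)
  (Hm1 : limsup_lt_infty sm1)
  (Hr1 : liminf_pos (fun n => sqrt (l (S n) / l n)))
  (Hr2 : limsup_lt_infty (fun n => sqrt (l (S n) / l n)))
  (Hk : limsup_lt_infty (fun n => Rabs (kappa n) / sqrt (l n)))
  (Hrec : forall n, (1 <= n)%nat ->
     l n = x n * (s1 n * x (S n) + s0 n * x n + sm1 n * x (pred n)) + kappa n * x n) :
  liminf_gt_neg_infty (fun n => x n / sqrt (l n)) <->
  limsup_lt_infty (fun n => x n / sqrt (l n)).
Proof.
  pose proof (upper_bound_of_lower_bound l s0 s1 sm1 hl hs1 hsm1 H1 H0 Hm1 Hr1 Hr2)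
    as one_sided.
  (* The symmetry (x, kappa) |-> (-x, -kappa) of the recurrence. *)
  assert (Hk_opp : limsup_lt_infty (fun n => Rabs (- kappa n) / sqrt (l n))).
  { destruct Hk as [K [N HK]]; exists K, N; intros n hn; rewrite Rabs_Ropp; auto. }
  assert (Hrec_opp : forall n, (1 <= n)%nat ->
    l n = - x n * (s1 n * - x (S n) + s0 n * - x n + sm1 n * - x (pred n))
          + - kappa n * - x n).
  { intros n hn; rewrite (Hrec n hn); ring. }
  assert (Hy_opp : forall n, - x n / sqrt (l n) = - (x n / sqrt (l n)))
    by (intros n; unfold Rdiv; ring).
  split.
  - apply (one_sided kappa x Hk Hrec).
  - intros Hup.
    apply (limsup_lt_infty_opp _ _ Hy_opp).
    apply (one_sided (fun n => - kappa n) (fun n => - x n) Hk_opp Hrec_opp).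
    apply (liminf_gt_neg_infty_opp _ _ Hy_opp), Hup.
Qed.
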